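(* Let $Q_+$ be an affine semigroup with $Q=\mathbb{Z}Q_+\cong\mathbb{Z}^d$, and let $\{M^1_n\}_{n\in\mathbb{Z}^k},\dots,\{M^r_n\}_{n\in\mathbb{Z}^k}$ be constructible families of $Q$-modules. Then the functions $n\mapsto\max\{i\mid M^i_n\neq0\}$ and $n\mapsto\min\{i\mid M^i_n\neq0\}$ (defined for those $n$ where some $M^i_n\neq0$) are piecewise quasiconstant, i.e., piecewise quasipolynomial of degree $0$.
   Context: $\Bbbk$ is a field; an affine semigroup is a finitely generated submonoid with trivial units of a free abelian group, and $Q$ is ordered by $q\preceq q'$ iff $q'-q\in Q_+$. Semisimple subset: finite disjoint union of sets $q+N$ with $N$ generated by linearly independent elements. A Presburger group is a partially ordered free abelian group of finite rank whose positive cone is semisimple and generates a finite-index subgroup. A module over a Presburger group $G$ (a $G$-graded $\Bbbk[G_+]$-module) is constructible if its graded pieces are finite-dimensional and $G$ can be partitioned into finitely many semisimple regions $I$ with vector spaces $M_I$ and isomorphisms $M_I\to M_g$ ($g\in I$) such that for $g\in I$, $h\in J$, $g\preceq h$, the composite $M_I\to M_g\to M_h\to M_J$ depends only on $I,J$. A family $\{M_n\}_{n\in\mathbb{Z}^k}$ of $Q$-modules is constructible if for some Presburger group $G=\mathbb{Z}^k\times Q$ whose positive cone $G_+$ satisfies $G_+\cap(\{0\}\times Q)=\{0\}\times Q_+$ (a Rees monoid), the direct sum $\bigoplus_nM_n(-n)$ with $M_n$ in slice $\{n\}\times Q$ is a $G$-graded $\Bbbk[G_+]$-module extending the slice structures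 and is constructible. Piecewise quasipolynomial: on each of finitely many rational convex polyhedra covering $\mathbb{Z}^k$, the function agrees with a function that is polynomial on each coset of some finite-index sublattice. *)

From HB Require Import structures.
From mathcomp Require Import all_boot all_order all_algebra.
Set Implicit Arguments. Unset Strict Implicit. Unset Printing Implicit Defensive.
Import Order.TTheory GRing.Theory Num.Theory.
Local Open Scope ring_scope.

Definition gen_monoid (V : zmodType) (r : nat) (v : 'I_r -> V) (x : V) : Prop :=
  exists c : 'I_r -> nat, x = \sum_(i < r) (v i *+ c i).

Definition lin_indep (V : zmodType) (r : nat) (v : 'I_r -> V) : Prop :=
  forall c : 'I_r -> int, \sum_(i < r) (v i *~ c i) = 0 -> forall i, c i = 0.

Definition semisimple (V : zmodType) (S : V -> Prop) : Prop :=
  exists (s : nat) (q : 'I_s -> V) (r : 'I_s -> nat) (v : forall j, 'I_(r j) -> V),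
    [/\ forall j, lin_indep (v j),
        forall x, S x <-> exists j, exists y, gen_monoid (v j) y /\ x = q j + y
      & forall j j' x y y', j != j' -> gen_monoid (v j) y -> gen_monoid (v j') y' ->
          x = q j + y -> x <> q j' + y'].

Definition finite_index (V : zmodType) (H : V -> Prop) : Prop :=
  exists (s : nat) (c : 'I_s -> V), forall x, exists j, H (x - c j).

Definition is_subgroup (V : zmodType) (H : V -> Prop) : Prop :=
  H 0 /\ forall x y, H x -> H y -> H (x - y).

Definition monoid_group (V : zmodType) (P : V -> Prop) (x : V) : Prop :=
  exists a b, [/\ P a, P b & x = a - b].

(* P is the positive cone of a Presburger group structure on V (V free abelian
   of finite rank): P is a pointed submonoid (so q <= q' iff P (q' - q) is a
   partial order), semisimple, generating a finite-index subgroup. *)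
Definition presburger_cone (V : zmodType) (P : V -> Prop) : Prop :=
  [/\ P 0, (forall x y, P x -> P y -> P (x + y)),
      (forall x, P x -> P (- x) -> x = 0),
      semisimple P
    & finite_index (monoid_group P)].

(* A V-graded K[P]-module with finite-dimensional graded pieces: piece g is
   K^(dim g) (row vectors), and act g h : M_g -> M_h (right multiplication) is
   the action of the monomial for h - g in P. *)
Definition is_gmodule (K : fieldType) (V : zmodType) (P : V -> Prop)
  (dim : V -> nat) (act : forall g h : V, 'M[K]_(dim g, dim h)) : Prop :=
  (forall g, act g g = 1%:M) /\
  (forall g h l, P (h - g) -> P (l - h) -> act g h *m act h l = act g l).

Definition constructible (K : fieldType) (V : zmodType) (P : V -> Prop)
  (dim : V -> nat) (act : forall g h : V, 'M[K]_(dim g, dim h)) : Prop :=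
  is_gmodule P act /\
  exists (s : nat) (reg : V -> 'I_s) (e : 'I_s -> nat)
         (phi : forall g, 'M[K]_(e (reg g), dim g))
         (psi : forall g, 'M[K]_(dim g, e (reg g)))
         (T : forall i j, 'M[K]_(e i, e j)),
    [/\ forall j, semisimple (fun g => reg g = j),
        forall g, phi g *m psi g = 1%:M /\ psi g *m phi g = 1%:M
      & forall g h, P (h - g) -> phi g *m act g h *m psi h = T (reg g) (reg h)].

(* Constructible family {M_n}_{n in Z^k} of Q-modules, Q = Z^d with positive
   cone Qplus; M_n has pieces K^(dim n q) and structure maps act n q q'. *)
Definition constructible_family (K : fieldType) (k d : nat)
  (Qplus : 'rV[int]_d -> Prop) (dim : 'rV[int]_k -> 'rV[int]_d -> nat)
  (act : forall n q q', 'M[K]_(dim n q, dim n q')) : Prop :=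
  exists P : 'rV[int]_k * 'rV[int]_d -> Prop,
  [/\ presburger_cone P,
      (forall q, P (0, q) <-> Qplus q)
    & exists actG : forall g h : 'rV[int]_k * 'rV[int]_d,
                      'M[K]_(dim g.1 g.2, dim h.1 h.2),
        constructible P actG /\
        forall n q q', Qplus (q' - q) -> actG (n, q) (n, q') = act n q q'].

Definition in_polyhedron (k m : nat) (A : 'M[rat]_(m, k)) (b : 'cV[rat]_m)
  (n : 'rV[int]_k) : Prop :=
  forall i : 'I_m, \sum_(l < k) A i l * (n 0 l)%:~R <= b i 0.

(* The partial function described by the relation F (F n v : "the function takes
   value v at n"; F n is empty where the function is undefined) is piecewise
   quasiconstant: finitely many rational convex polyhedra cover Z^k, and on each
   the function agrees (where defined) with a function constant on each coset
   of some finite-index sublattice. *)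
Definition piecewise_quasiconstant (k : nat) (F : 'rV[int]_k -> nat -> Prop) : Prop :=
  exists (p : nat) (m : 'I_p -> nat) (A : forall j, 'M[rat]_(m j, k))
         (b : forall j, 'cV[rat]_(m j)) (L : 'I_p -> 'rV[int]_k -> Prop)
         (c : 'I_p -> 'rV[int]_k -> int),
    [/\ forall n, exists j, in_polyhedron (A j) (b j) n,
        forall j, is_subgroup (L j) /\ finite_index (L j),
        forall j n n', L j (n - n') -> c j n = c j n'
      & forall j n v, in_polyhedron (A j) (b j) n -> F n v -> c j n = v%:Z].

(* M^i_n <> 0, with modules indexed by i : 'I_r standing for i.+1 in 1..r *)
Definition max_nonzero (r : nat) (k : nat) (nz : 'I_r -> 'rV[int]_k -> Prop)
  (n : 'rV[int]_k) (v : nat) : Prop :=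
  (exists i : 'I_r, nz i n /\ v = i.+1) /\ (forall i : 'I_r, nz i n -> (i.+1 <= v)%N).

Definition min_nonzero (r : nat) (k : nat) (nz : 'I_r -> 'rV[int]_k -> Prop)
  (n : 'rV[int]_k) (v : nat) : Prop :=
  (exists i : 'I_r, nz i n /\ v = i.+1) /\ (forall i : 'I_r, nz i n -> (v <= i.+1)%N).

(* Each support {n | M^i_n <> 0} is the projection to Z^k of finitely many
   semisimple regions, hence a finite union of affine monoids p + N w_1 + ... + N w_R.
   Such sets are piecewise periodic: Z^k is covered by finitely many rational
   polyhedra on each of which membership only depends on the class modulo some m.
   Half-spaces and points are piecewise periodic, and the class is closed under
   finite boolean combinations (refine the covers) and under adding a ray N w.  On a
   cell, x - s w lies in a polyhedron for some s in N iff a system of constraints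
   b_i(x) <= s a_i is solvable in N, i.e. iff every constraint with a_i <= 0 holds
   at s = 0 and every pair of opposite constraints has a common integer solution;
   the latter is periodic on the level sets of a linear form.  On a common cover for
   the r supports, the set of indices i with M^i_n <> 0, hence its max and min, is
   periodic on each cell. *)

From HB Require Import structures.
From mathcomp Require Import all_boot all_order all_algebra.
From mathcomp Require Import zify ring.
From Stdlib Require Import ClassicalEpsilon FunctionalExtensionality PropExtensionality.
Set Implicit Arguments. Unset Strict Implicit. Unset Printing Implicit Defensive.
Import Order.TTheory GRing.Theory Num.Theory.
Local Open Scope ring_scope.

Definition ceil_div (b a : int) : int := ((b + a - 1) %/ a)%Z.

Lemma ceil_divP a b : 0 < a -> b <= ceil_div b a * a.
Proof.
move=> a_gt0; have := divz_eq (b + a - 1) a; have := ltz_pmod (b + a - 1) a_gt0.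
by have := modz_ge0 (b + a - 1) (lt0r_neq0 a_gt0); rewrite /ceil_div; lia.
Qed.

Lemma ceil_div_min a b s : 0 < a -> b <= s * a -> ceil_div b a <= s.
Proof.
move=> a_gt0 bs; have := divz_eq (b + a - 1) a; have := ltz_pmod (b + a - 1) a_gt0.
by have := modz_ge0 (b + a - 1) (lt0r_neq0 a_gt0); rewrite /ceil_div; nia.
Qed.

Section IntBetween.
Variables (al al' : int).
Hypotheses (al_gt0 : 0 < al) (al'_lt0 : al' < 0).

(* Since al > 0 > al', this says that the interval [u / al, u' / al'] contains an integer. *)
Definition int_between (u u' : int) := exists s : int, u <= s * al /\ u' <= s * al'.

Lemma int_between_cross_ge0 u u' : int_between u u' -> 0 <= al' * u - al * u'.
Proof. by move=> [s [us u's]]; nia. Qed.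

Lemma int_between_cross_large u u' :
  - (al * al') - 1 <= al' * u - al * u' -> int_between u u'.
Proof.
move=> uu'; exists (ceil_div u al); split; first exact: ceil_divP.
have : al * u' <= al * (ceil_div u al * al') by rewrite /ceil_div; nia.
by rewrite ler_pM2l.
Qed.

Lemma int_between_cross_shift u u' v v' :
  (al * al' %| v - u)%Z -> (al * al' %| v' - u')%Z ->
  al' * u - al * u' = al' * v - al * v' -> int_between u u' -> int_between v v'.
Proof.
move=> /dvdzP[q vu] /dvdzP[q' vu'] eqD [s [us u's]].
have eqq : al' * q = al * q'.
  have : al * al' * (al' * q - al * q') = 0 by nia.
  by move/eqP; rewrite !mulf_eq0 subr_eq0 => /orP[/orP[] | /eqP] //; lia.
by exists (s + al' * q); split; nia.
Qed.
End IntBetween.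

Lemma nat_solution_of_pairwise (cs : seq (int * int)) :
  (forall c, c \in cs -> c.1 <= 0 -> c.2 <= 0) ->
  (forall c c', c \in cs -> c' \in cs -> 0 < c.1 -> c'.1 < 0 ->
     int_between c.1 c'.1 c.2 c'.2) ->
  exists s : nat, forall c, c \in cs -> c.2 <= s%:Z * c.1.
Proof.
move=> nonpos opposite.
pose lb (c : int * int) := absz (Num.max 0 (ceil_div c.2 c.1)).
have lbE c : (lb c)%:Z = Num.max 0 (ceil_div c.2 c.1) by rewrite /lb gez0_abs // le_max lexx.
have lbP c : 0 < c.1 -> c.2 <= (lb c)%:Z * c.1.
  move=> c_pos; have := ceil_divP c.2 c_pos; rewrite lbE.
  by case: (lerP 0 (ceil_div c.2 c.1)) => q0; rewrite ?(max_r (ltW q0)) ?max_l //; nia.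
have lb_min c s : 0 < c.1 -> c.2 <= s * c.1 -> (lb c)%:Z <= Num.max 0 s.
  by move=> c_pos cs0; rewrite lbE ge_max !le_max lexx /= (ceil_div_min c_pos cs0) orbT.
(* The largest lower bound is below every upper bound, by the pairwise hypothesis. *)
pose s0 := \max_(c <- cs | (0 < c.1)%R) lb c.
exists s0 => c cin.
case: (ltrgtP c.1 0) => [c_neg | c_pos | c_0]; last by rewrite c_0 mulr0 nonpos ?c_0.
- pose ub := - ceil_div c.2 (- c.1).
  have ubP s : c.2 <= s * c.1 -> s <= ub.
    by move=> cs0; rewrite /ub lerNr ceil_div_min ?oppr_gt0 // mulrNN.
  have ub_c : c.2 <= ub * c.1 by rewrite /ub mulNr -mulrN ceil_divP // oppr_gt0.
  have ub_ge0 : 0 <= ub by apply: ubP; rewrite mul0r nonpos // ltW.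
  suff : (s0 <= `|ub|)%N by nia.
  apply/bigmax_leqP_seq => c1 c1in c1_pos.
  have [s1 [c1s1 cs1]] := opposite c1 c c1in cin c1_pos c_neg.
  have := ubP s1 cs1; have := lb_min c1 s1 c1_pos c1s1; lia.
- apply: le_trans (lbP c c_pos) _.
  by rewrite ler_pM2r // lez_nat; apply: leq_bigmax_seq.
Qed.

Lemma gen_monoid0 (V : zmodType) (w : 'I_0 -> V) y : gen_monoid w y <-> y = 0.
Proof. by split=> [[c ->] | ->]; [rewrite big_ord0 | exists (fun=> 0%N); rewrite big_ord0]. Qed.

Lemma gen_monoidS (V : zmodType) R (w : 'I_R.+1 -> V) y :
  gen_monoid w y <-> exists t : nat, gen_monoid (fun i => w (lift ord0 i)) (y - w ord0 *+ t).
Proof.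
split=> [[c ->] | [t [c yE]]].
  by exists (c ord0), (fun i => c (lift ord0 i)); rewrite big_ord_recl addrC addKr.
exists (fun i => if unlift ord0 i is Some j then c j else t).
by rewrite big_ord_recl unlift_none; under eq_bigr do rewrite liftK; rewrite -yE addrC subrK.
Qed.

Lemma gen_monoid_additive (U V : zmodType) (f : {additive U -> V}) R (w : 'I_R -> U) y :
  gen_monoid w y -> gen_monoid (f \o w) (f y).
Proof. by move=> [c ->]; exists c; rewrite raddf_sum; apply: eq_bigr => i _; rewrite raddfMn. Qed.

Section PiecewisePeriodic.
Variable k : nat.
Local Notation vec := 'rV[int]_k.

Definition dot (a x : vec) : int := \sum_(l < k) a 0 l * x 0 l.

Fact dot_is_zmod_morphism a : zmod_morphism (dot a).
Proof.
by move=> x y; rewrite /dot -sumrB; apply: eq_bigr => l _; rewrite !mxE mulrBr.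
Qed.
HB.instance Definition _ a :=
  GRing.isZmodMorphism.Build _ _ (dot a) (dot_is_zmod_morphism a).

Lemma dotZl c a x : dot (c *: a) x = c * dot a x.
Proof. by rewrite /dot big_distrr; apply: eq_bigr => l _; rewrite mxE -mulrA. Qed.

Lemma dotBl a a' x : dot (a - a') x = dot a x - dot a' x.
Proof. by rewrite /dot -sumrB; apply: eq_bigr => l _; rewrite !mxE mulrBl. Qed.

Lemma dotNl a x : dot (- a) x = - dot a x.
Proof. by rewrite -[- a]add0r dotBl /dot big1 ?sub0r // => l _; rewrite mxE mul0r. Qed.

Lemma dot_delta (l : 'I_k) x : dot (\row_j (j == l)%:R) x = x 0 l.
Proof.
rewrite /dot (bigD1 l) //= big1 ?addr0 => [|j /negbTE jl]; rewrite mxE ?eqxx ?mul1r //.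
by rewrite jl mul0r.
Qed.

Definition eqmodv (m : nat) (x y : vec) := forall l, (m%:Z %| (x 0 l - y 0 l)%R)%Z.

Lemma eqmodv_refl m x : eqmodv m x x.
Proof. by move=> l; rewrite subrr dvdz0. Qed.

Lemma eqmodv_sym m x y : eqmodv m x y -> eqmodv m y x.
Proof. by move=> xy l; rewrite -opprB rpredN. Qed.

Lemma eqmodv_trans m x y z : eqmodv m x y -> eqmodv m y z -> eqmodv m x z.
Proof. by move=> xy yz l; rewrite -(subrK (y 0 l) (x 0 l)) -addrA rpredD. Qed.

Lemma eqmodv_dvd m m' x y : (m' %| m)%N -> eqmodv m x y -> eqmodv m' x y.
Proof. by move=> m'm xy l; apply: dvdz_trans (xy l); rewrite dvdzE !absz_nat. Qed.

Lemma eqmodvB m x y z : eqmodv m x y -> eqmodv m (x - z) (y - z).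
Proof. by move=> xy l; rewrite !mxE opprB addrA subrK. Qed.

Lemma eqmodv_subMn m x w r s : eqmodv m (x - w *+ (r + m * s)) (x - w *+ r).
Proof.
move=> l; rewrite !mxE !mulmxnE mulrnDr.
have -> (a b c : int) : a - (b + c) - (a - b) = - c by ring.
by rewrite rpredN -mulr_natr natz PoszM dvdz_mull // dvdz_mulr.
Qed.

Lemma dot_eqmodv m a x y : eqmodv m x y -> (m%:Z %| dot a x - dot a y)%Z.
Proof.
move=> xy; rewrite -raddfB /dot rpred_sum // => l _.
by rewrite !mxE; apply/dvdz_mull/xy.
Qed.

Definition in_cell (c : seq (vec * int)) (x : vec) : bool :=
  all (fun p => dot p.1 x <= p.2) c.

Definition covering (cs : seq (seq (vec * int))) := forall x, has (in_cell^~ x) cs.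

Definition periodic_on (cs : seq (seq (vec * int))) (m : nat) (S : vec -> Prop) :=
  forall c, c \in cs -> forall x x',
    in_cell c x -> in_cell c x' -> eqmodv m x x' -> S x -> S x'.

Definition piecewise_periodic (S : vec -> Prop) :=
  exists cs m, [/\ (0 < m)%N, covering cs & periodic_on cs m S].

Definition refine_cells (cs1 cs2 : seq (seq (vec * int))) :=
  [seq c1 ++ c2 | c1 <- cs1, c2 <- cs2].

Lemma covering_refine cs1 cs2 :
  covering cs1 -> covering cs2 -> covering (refine_cells cs1 cs2).
Proof.
move=> cov1 cov2 x; have /hasP[c1 c1in x_c1] := cov1 x; have /hasP[c2 c2in x_c2] := cov2 x.
apply/hasP; exists (c1 ++ c2); first by apply/allpairsP; exists (c1, c2).
by rewrite /= /in_cell all_cat; apply/andP.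
Qed.

Lemma periodic_on_refinel cs1 cs2 m1 m2 S :
  periodic_on cs1 m1 S -> periodic_on (refine_cells cs1 cs2) (m1 * m2) S.
Proof.
move=> per1 _ /allpairsP[[c1 c2] /= [c1in _ ->]] x x'; rewrite /in_cell !all_cat.
move=> /andP[x_c1 _] /andP[x'_c1 _] /(eqmodv_dvd (dvdn_mulr _ (dvdnn m1))).
exact: per1 c1in x x' x_c1 x'_c1.
Qed.

Lemma periodic_on_refiner cs1 cs2 m1 m2 S :
  periodic_on cs2 m2 S -> periodic_on (refine_cells cs1 cs2) (m1 * m2) S.
Proof.
move=> per2 _ /allpairsP[[c1 c2] /= [_ c2in ->]] x x'; rewrite /in_cell !all_cat.
move=> /andP[_ x_c2] /andP[_ x'_c2] /(eqmodv_dvd (dvdn_mull _ (dvdnn m2))).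
exact: per2 c2in x x' x_c2 x'_c2.
Qed.

Lemma common_cells (T : eqType) (l : seq T) (S : T -> vec -> Prop) :
  (forall a, a \in l -> piecewise_periodic (S a)) ->
  exists cs m, [/\ (0 < m)%N, covering cs & forall a, a \in l -> periodic_on cs m (S a)].
Proof.
elim: l => [|a l IHl] pwS; first by exists [:: [::]], 1%N.
have [cs1 [m1 [m1_gt0 cov1 per1]]] := pwS a (mem_head a l).
have [cs2 [m2 [m2_gt0 cov2 per2]]] := IHl (fun b bl => pwS b (mem_behead (s := a :: l) bl)).
exists (refine_cells cs1 cs2), (m1 * m2)%N; split; first by rewrite muln_gt0 m1_gt0.
  exact: covering_refine.
move=> b; rewrite inE => /predU1P[-> | bl].
  exact: periodic_on_refinel.
exact: periodic_on_refiner (per2 b bl).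
Qed.

Lemma periodic_on_pattern (T : eqType) (l : seq T) (S : T -> vec -> Prop) cs m P :
  (forall a, a \in l -> periodic_on cs m (S a)) ->
  (forall x x', (forall a, a \in l -> S a x <-> S a x') -> P x -> P x') ->
  periodic_on cs m P.
Proof.
move=> perS patP c cin x x' x_c x'_c xx'; apply: patP => a al.
by split; apply: (perS a al c cin) => //; apply: eqmodv_sym.
Qed.

Lemma piecewise_periodic_pattern (T : eqType) (l : seq T) (S : T -> vec -> Prop) P :
  (forall a, a \in l -> piecewise_periodic (S a)) ->
  (forall x x', (forall a, a \in l -> S a x <-> S a x') -> P x -> P x') ->
  piecewise_periodic P.
Proof.
move=> /common_cells[cs [m [m_gt0 cov perS]]] patP.
by exists cs, m; split=> //; apply: periodic_on_pattern perS patP.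
Qed.

Lemma piecewise_periodic_ext S S' :
  piecewise_periodic S -> (forall x, S x <-> S' x) -> piecewise_periodic S'.
Proof.
move=> pwS SS'; apply: (@piecewise_periodic_pattern _ [:: tt] (fun=> S)) => [// | x x' e].
by move/SS'/(e tt (mem_head _ _))/SS'.
Qed.

Lemma piecewise_periodic_periodic m S :
  (0 < m)%N -> (forall x x', eqmodv m x x' -> S x -> S x') -> piecewise_periodic S.
Proof. by move=> m_gt0 perS; exists [:: [::]], m; split=> // _ _ x x' _ _; apply: perS. Qed.

Lemma piecewise_periodic_and S1 S2 : piecewise_periodic S1 -> piecewise_periodic S2 ->
  piecewise_periodic (fun x => S1 x /\ S2 x).
Proof.
move=> pw1 pw2.
apply: (@piecewise_periodic_pattern _ [:: true; false] (fun b => if b then S1 else S2)).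
  by case.
by move=> x x' e [/(e true) S1x /(e false) S2x]; split; [apply: S1x | apply: S2x].
Qed.

Lemma piecewise_periodic_all (T : eqType) (l : seq T) (S : T -> vec -> Prop) :
  (forall a, a \in l -> piecewise_periodic (S a)) ->
  piecewise_periodic (fun x => forall a, a \in l -> S a x).
Proof.
by move=> pwS; apply: piecewise_periodic_pattern pwS _ => x x' e Sx a al; apply/(e a al)/Sx.
Qed.

Lemma piecewise_periodic_ex (T : eqType) (l : seq T) (S : T -> vec -> Prop) :
  (forall a, a \in l -> piecewise_periodic (S a)) ->
  piecewise_periodic (fun x => exists2 a, a \in l & S a x).
Proof.
by move=> pwS; apply: piecewise_periodic_pattern pwS _ => x x' e [a al /(e a al)]; exists a.
Qed.

Lemma piecewise_periodic_halfspace a b : piecewise_periodic (fun x => dot a x <= b).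
Proof.
exists [:: [:: (a, b)]; [:: (- a, - b - 1)]], 1%N; split=> //.
  by move=> x /=; rewrite /in_cell /= !andbT dotNl orbF; case: lerP => //=; lia.
by move=> c; rewrite !inE => /orP[] /eqP -> x x'; rewrite /in_cell /= !andbT ?dotNl //; lia.
Qed.

Lemma piecewise_periodic_point p : piecewise_periodic (fun x => x = p).
Proof.
pose e l : vec := \row_j (j == l)%:R.
have pw : piecewise_periodic (fun x => forall l, l \in enum 'I_k ->
            dot (e l) x <= p 0 l /\ dot (- e l) x <= - p 0 l).
  by apply: piecewise_periodic_all => l _; apply: piecewise_periodic_and;
    apply: piecewise_periodic_halfspace.
apply: piecewise_periodic_ext pw _ => x; rewrite /e; split=> [xp | -> l _].
  apply/rowP => l; have := xp l (mem_enum _ l).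
  rewrite dotNl !dot_delta lerN2 => -[xp1 xp2].
  by apply/eqP; rewrite eq_le xp1 xp2.
by rewrite dotNl dot_delta lexx.
Qed.

Lemma piecewise_periodic_int_between al al' (a a' : vec) e e' : 0 < al -> al' < 0 ->
  piecewise_periodic (fun x => int_between al al' (dot a x + e) (dot a' x + e')).
Proof.
move=> al_gt0 al'_lt0.
(* Cells: D >= |al al'| - 1 (the set is everything), D < 0 (it is empty), and the
   level sets D = i in between, on which it is |al al'|-periodic. *)
pose D x := al' * (dot a x + e) - al * (dot a' x + e').
pose a'' := al' *: a - al *: a'; pose ka := al' * e - al * e'.
have DE x : D x = dot a'' x + ka by rewrite /D dotBl !dotZl /ka; ring.
set M := `|(al * al')%R|%N; have MP : M%:Z = - (al * al') by rewrite /M ltz0_abs; nia.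
exists ([:: [:: (- a'', ka - M%:Z + 1)], [:: (a'', - 1 - ka)]
          & [seq [:: (a'', i%:Z - ka); (- a'', ka - i%:Z)] | i <- iota 0 M]]), M.
split; first by lia.
- move=> x; rewrite /= /in_cell /= !andbT !dotNl; have := DE x.
  case: (lerP (M%:Z - 1) (D x)) => [| DM]; first by lia.
  case: (lerP (D x) (-1)) => [| Dpos]; first by lia.
  move=> Dx; apply/orP; right; apply/orP; right; apply/hasP.
  exists [:: (a'', `|D x|%:Z - ka); (- a'', ka - `|D x|%:Z)].
    by apply/mapP; exists `|D x|%N => //; rewrite mem_iota; lia.
  by rewrite /in_cell /= dotNl andbT; lia.
move=> c; rewrite !inE => /orP[/eqP -> | /orP[/eqP -> | /mapP[i _ ->]]] x x';
  rewrite /in_cell /= ?dotNl !andbT.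
- move=> _ x'c _ _; apply: int_between_cross_large => //; rewrite -/(D x') DE; lia.
- by move=> xc _ _ /int_between_cross_ge0; rewrite -/(D x) DE; lia.
- move=> /andP[xc1 xc2] /andP[x'c1 x'c2] xx'; apply: int_between_cross_shift => //.
    1,2: by rewrite opprD addrACA subrr addr0; apply: dot_eqmodv (eqmodv_sym xx').
  by rewrite -/(D x) -/(D x') !DE; lia.
Qed.

Lemma piecewise_periodic_cell_ray (c : seq (vec * int)) (z w : vec) :
  piecewise_periodic (fun x => exists s : nat, in_cell c (x - z - w *+ s)).
Proof.
pose al (p : vec * int) := dot p.1 w.
pose be (p : vec * int) x := dot p.1 x - (dot p.1 z + p.2).
have in_cellE x s : in_cell c (x - z - w *+ s) = all (fun p => be p x <= s%:Z * al p) c.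
  apply: eq_all => p; rewrite !raddfB raddfMn /= /be /al -mulr_natl natz.
  by apply/idP/idP; lia.
pose H x := forall p, p \in c -> al p <= 0 -> be p x <= 0.
pose G x := forall p, p \in c -> forall p', p' \in c -> 0 < al p -> al p' < 0 ->
  int_between (al p) (al p') (be p x) (be p' x).
have pwH : piecewise_periodic H.
  apply: piecewise_periodic_all => p _; case: lerP => _; last first.
    by apply: (@piecewise_periodic_periodic 1).
  apply: piecewise_periodic_ext (piecewise_periodic_halfspace p.1 (dot p.1 z + p.2)) _.
  by move=> x; rewrite /be subr_le0; split=> [? _ | /(_ isT)].
have pwG : piecewise_periodic G.
  apply: piecewise_periodic_all => p _; apply: piecewise_periodic_all => p' _.
  case: (boolP ((0 < al p) && (al p' < 0))) => [/andP[al_gt0 al'_lt0] | not_opp].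
    apply: piecewise_periodic_ext (piecewise_periodic_int_between p.1 p'.1
      (- (dot p.1 z + p.2)) (- (dot p'.1 z + p'.2)) al_gt0 al'_lt0) _.
    by move=> x; split=> [? _ _ | /(_ al_gt0 al'_lt0)].
  apply: (@piecewise_periodic_periodic 1) => // x x' _ _ al_gt0 al'_lt0.
  by move: not_opp; rewrite al_gt0 al'_lt0.
apply: piecewise_periodic_ext (piecewise_periodic_and pwH pwG) _ => x.
split=> [[Hx Gx] | [s]].
  have [||s sP] := nat_solution_of_pairwise (cs := [seq (al p, be p x) | p <- c]).
  - by move=> _ /mapP[p pc ->]; apply: Hx.
  - by move=> _ _ /mapP[p pc ->] /mapP[p' p'c ->]; apply: Gx.
  by exists s; rewrite in_cellE; apply/allP => p pc; apply: (sP (al p, be p x)); apply: map_f.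
rewrite in_cellE => /allP sP; split=> [p pc al_le0 | p pc p' p'c _ _].
  by have := sP p pc; nia.
by exists s; split; apply: sP.
Qed.

Lemma piecewise_periodic_add_ray S (w : vec) : piecewise_periodic S ->
  piecewise_periodic (fun x => exists t : nat, S (x - w *+ t)).
Proof.
move=> [cs [m [m_gt0 cov per]]].
(* Write t = r + m s with r < m and pick the cell c containing x - t w: membership
   then only depends on x - r w modulo m and on x - r w lying in c + N (m w). *)
pose near c r x := exists2 y, in_cell c y & eqmodv m y (x - w *+ r) /\ S y.
pose ray c r x := exists s : nat, in_cell c (x - w *+ r - (w *+ m) *+ s).
have pw : piecewise_periodic (fun x =>
    exists2 c, c \in cs & exists2 r, r \in iota 0 m & near c r x /\ ray c r x).
  apply: piecewise_periodic_ex => c _; apply: piecewise_periodic_ex => r _.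
  apply: piecewise_periodic_and; last exact: piecewise_periodic_cell_ray.
  apply: (piecewise_periodic_periodic m_gt0) => x x' xx' [y yc [yx Sy]].
  by exists y => //; split=> //; apply: eqmodv_trans yx (eqmodvB _ xx').
apply: piecewise_periodic_ext pw _ => x; split.
  move=> [c cin [r _ [[y yc [yx Sy]] [s xs]]]]; exists (r + m * s)%N.
  rewrite -mulrnA -addrA -opprD -mulrnDr in xs.
  apply: (per c cin y) Sy => //.
  exact: eqmodv_trans yx (eqmodv_sym (eqmodv_subMn _ _ _ _ _)).
move=> [t St]; have /hasP[c cin xc] := cov (x - w *+ t).
have tE : t = (t %% m + m * (t %/ m))%N by rewrite addnC mulnC -divn_eq.
exists c => //; exists (t %% m)%N; first by rewrite mem_iota ltn_pmod.
split; first by exists (x - w *+ t) => //; split=> //; rewrite {1}tE; apply: eqmodv_subMn.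
by exists (t %/ m)%N; rewrite -mulrnA -addrA -opprD -mulrnDr -tE.
Qed.

Lemma piecewise_periodic_affine_monoid R (w : 'I_R -> vec) p :
  piecewise_periodic (fun x => gen_monoid w (x - p)).
Proof.
elim: R w p => [|R IHR] w p.
  apply: piecewise_periodic_ext (piecewise_periodic_point p) _ => x.
  by rewrite gen_monoid0; split=> [-> | /eqP]; rewrite ?subrr // subr_eq0 => /eqP.
have IHw := IHR (fun i => w (lift ord0 i)) p.
apply: piecewise_periodic_ext (piecewise_periodic_add_ray (w ord0) IHw) _ => x.
by rewrite gen_monoidS; split=> -[t wt]; exists t; rewrite addrAC.
Qed.

Definition cell_mx (c : seq (vec * int)) : 'M[rat]_(size c, k) :=
  \matrix_(i, l) ((nth (0, 0) c i).1 0 l)%:~R.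

Definition cell_rhs (c : seq (vec * int)) : 'cV[rat]_(size c) :=
  \col_i ((nth (0, 0) c i).2)%:~R.

Lemma in_polyhedron_cell c n : in_polyhedron (cell_mx c) (cell_rhs c) n <-> in_cell c n.
Proof.
have rowE i : \sum_(l < k) cell_mx c i l * (n 0 l)%:~R = (dot (nth (0, 0) c i).1 n)%:~R.
  by rewrite /dot rmorph_sum; apply: eq_bigr => l _; rewrite mxE rmorphM.
split=> [cn | /(all_nthP (0, 0)) cn i].
  by apply/(all_nthP (0, 0)) => i ic; have := cn (Ordinal ic); rewrite rowE mxE ler_int.
by rewrite rowE mxE ler_int cn.
Qed.

Lemma is_subgroup_eqmodv m : is_subgroup (eqmodv m ^~ (0 : vec)).
Proof.
split=> [|x y x0 y0 l]; first exact: eqmodv_refl.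
by have := rpredB (x0 l) (y0 l); rewrite !mxE !subr0.
Qed.

Lemma finite_index_eqmodv m : (0 < m)%N -> finite_index (eqmodv m ^~ (0 : vec)).
Proof.
case: m => // m _.
exists #|{ffun 'I_k -> 'I_m.+1}|,
  (fun j => \row_l ((enum_val j : {ffun 'I_k -> 'I_m.+1}) l)%:Z).
move=> x; pose f := [ffun l => inord (absz (modz (x 0 l) m.+1)) : 'I_m.+1].
exists (enum_rank f) => l; rewrite !mxE enum_rankK ffunE inordK; last first.
  by have := ltz_pmod (x 0 l) (isT : 0 < m.+1%:Z); lia.
rewrite subr0; apply/dvdzP; exists (divz (x 0 l) m.+1).
by have := modz_ge0 (x 0 l) (isT : m.+1%:Z != 0); move: (x 0 l) => y; lia.
Qed.

Lemma piecewise_quasiconstant_of_periodic_on (F : vec -> nat -> Prop) cs m :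
  (0 < m)%N -> covering cs -> (forall v, periodic_on cs m (F^~ v)) ->
  (forall n v v', F n v -> F n v' -> v = v') -> piecewise_quasiconstant F.
Proof.
move=> m_gt0 cov per Ffun.
pose C (j : 'I_(size cs)) := nth [::] cs j.
(* The value of F at some point of the cell C j congruent to n, and 0 if there is none. *)
pose val j n := epsilon (inhabits 0%N)
  (fun v => exists2 n', in_cell (C j) n' & eqmodv m n n' /\ F n' v).
exists (size cs), (fun j => size (C j)), (fun j => cell_mx (C j)), (fun j => cell_rhs (C j)),
  (fun _ => eqmodv m ^~ 0), (fun j n => (val j n)%:Z); split.
- move=> n; have /hasP[c cin nc] := cov n.
  have ci : (index c cs < size cs)%N by rewrite index_mem.
  by exists (Ordinal ci); apply/in_polyhedron_cell; rewrite /C nth_index.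
- by move=> j; split; [apply: is_subgroup_eqmodv | apply: finite_index_eqmodv].
- move=> j n n' nn'; congr (_%:Z); rewrite /val; congr (epsilon _ _).
  have nn : eqmodv m n n' by move=> l; have := nn' l; rewrite !mxE subr0.
  apply: functional_extensionality => v; apply: propositional_extensionality.
  split=> -[y yc [ny Fyv]]; exists y => //; split=> //.
    exact: eqmodv_trans (eqmodv_sym nn) ny.
  exact: eqmodv_trans nn ny.
- move=> j n v /in_polyhedron_cell nc Fnv.
  have [|n' n'c [nn' Fn'v]] := epsilon_spec (inhabits 0%N)
    (fun v => exists2 n', in_cell (C j) n' & eqmodv m n n' /\ F n' v).
    by exists v, n => //; split=> //; apply: eqmodv_refl.
  congr (_%:Z); apply: (Ffun n _ _ _ Fnv).
  by apply: (per _ (C j) (mem_nth _ (ltn_ord j)) n') => //; apply: eqmodv_sym.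
Qed.
End PiecewisePeriodic.

Lemma piecewise_periodic_proj_semisimple k (V : zmodType) (S : 'rV[int]_k * V -> Prop) :
  semisimple S -> piecewise_periodic (fun n => exists q, S (n, q)).
Proof.
move=> [s [q [r [v [_ SE _]]]]].
have pw := piecewise_periodic_ex (fun j _ =>
  piecewise_periodic_affine_monoid (fun i => (v j i).1) (q j).1) (l := enum 'I_s).
apply: piecewise_periodic_ext pw _ => n; split=> [[j _ [c nE]] | [q' /SE[j [y [vy nqE]]]]].
  pose y := \sum_(i < r j) v j i *+ c i.
  exists (q j + y).2; apply/SE; exists j, y; split; first by exists c.
  apply: injective_projections => //=; rewrite -[n](subrK (q j).1) nE addrC.
  by rewrite /y raddf_sum; congr (_ + _); apply: eq_bigr => i _; rewrite raddfMn.
exists j; first by rewrite mem_enum.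
have nE : n = (q j).1 + y.1 := congr1 fst nqE.
by rewrite nE addrC addKr; apply: (gen_monoid_additive fst vy).
Qed.

Lemma piecewise_periodic_support (K : fieldType) k d (Qplus : 'rV[int]_d -> Prop)
    (dim : 'rV[int]_k -> 'rV[int]_d -> nat) (act : forall n q q', 'M[K]_(dim n q, dim n q')) :
  constructible_family Qplus act -> piecewise_periodic (fun n => exists q, dim n q <> 0%N).
Proof.
move=> [P [_ _ [actG [[_ [s [reg [e [phi [psi [T [reg_ss phi_inv _]]]]]]]] _]]]].
have dimE g : dim g.1 g.2 = e (reg g).
  have [phipsi psiphi] := phi_inv g.
  by apply/eqP; rewrite eqn_leq (mulmx1_min phipsi) (mulmx1_min psiphi).
have const rho : piecewise_periodic (fun _ : 'rV[int]_k => e rho != 0%N).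
  exact: (@piecewise_periodic_periodic _ 1).
have pw := piecewise_periodic_ex (l := enum 'I_s) (fun rho _ =>
  piecewise_periodic_and (const rho) (piecewise_periodic_proj_semisimple (reg_ss rho))).
apply: piecewise_periodic_ext pw _ => n.
split=> [[rho _ [/eqP e_neq0 [q qrho]]] | [q dim_neq0]].
  by exists q; rewrite (dimE (n, q)) qrho.
exists (reg (n, q)); first by rewrite mem_enum.
by split; [apply/eqP; rewrite -(dimE (n, q)) | exists q].
Qed.

Section ExtremalIndex.
Variables (r k : nat) (nz : 'I_r -> 'rV[int]_k -> Prop).

Lemma max_nonzero_pattern n n' v : (forall i, nz i n <-> nz i n') ->
  max_nonzero nz n v -> max_nonzero nz n' v.
Proof.
move=> nn' [[i [nzi ->]] maxi]; split; first by exists i; split=> //; apply/nn'.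
by move=> j /nn'; apply: maxi.
Qed.

Lemma min_nonzero_pattern n n' v : (forall i, nz i n <-> nz i n') ->
  min_nonzero nz n v -> min_nonzero nz n' v.
Proof.
move=> nn' [[i [nzi ->]] mini]; split; first by exists i; split=> //; apply/nn'.
by move=> j /nn'; apply: mini.
Qed.

Lemma max_nonzero_fun n v v' : max_nonzero nz n v -> max_nonzero nz n v' -> v = v'.
Proof.
by move=> [[i [nzi ->]] maxi] [[j [nzj ->]] maxj]; have := maxi j nzj; have := maxj i nzi; lia.
Qed.

Lemma min_nonzero_fun n v v' : min_nonzero nz n v -> min_nonzero nz n v' -> v = v'.
Proof.
by move=> [[i [nzi ->]] mini] [[j [nzj ->]] minj]; have := mini j nzj; have := minj i nzi; lia.
Qed.
End ExtremalIndex.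

Theorem lemma9p2
  (K : fieldType) (k d : nat)
  (* the affine semigroup Q_+ in Q = Z Q_+ = Z^d, generated by gens *)
  (t : nat) (gens : 'I_t -> 'rV[int]_d)
  (Hunits : forall x, gen_monoid gens x -> gen_monoid gens (- x) -> x = 0)
  (Hgen : forall x, monoid_group (gen_monoid gens) x)
  (* r families {M^i_n}_n of Q-modules *)
  (r : nat) (dim : 'I_r -> 'rV[int]_k -> 'rV[int]_d -> nat)
  (act : forall i n q q', 'M[K]_(dim i n q, dim i n q'))
  (Hmod : forall i n, is_gmodule (gen_monoid gens) (act i n))
  (Hcons : forall i, constructible_family (gen_monoid gens) (act i)) :
  let nz := fun (i : 'I_r) (n : 'rV[int]_k) => exists q, dim i n q <> 0%N in
  piecewise_quasiconstant (max_nonzero nz) /\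
  piecewise_quasiconstant (min_nonzero nz).
Proof.
move=> nz.
have [cs [m [m_gt0 cov per]]] := common_cells (l := enum 'I_r) (S := nz)
  (fun i _ => piecewise_periodic_support (Hcons i)).
have pattern n n' :
    (forall i, i \in enum 'I_r -> nz i n <-> nz i n') -> forall i, nz i n <-> nz i n'.
  by move=> nn' i; apply: nn'; rewrite mem_enum.
split; apply: (piecewise_quasiconstant_of_periodic_on m_gt0 cov).
- by move=> v; apply: periodic_on_pattern per _ => n n' /pattern; apply: max_nonzero_pattern.
- exact: max_nonzero_fun.
- by move=> v; apply: periodic_on_pattern per _ => n n' /pattern; apply: min_nonzero_pattern.
- exact: min_nonzero_fun.
Qed.
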